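(* Let $q$ be a prime power, $h\geq 2$, and let $\mathcal{L}$ be a blocking set of $\mathrm{PG}(2,q^h)$ projectively equivalent to $\{(x:\mathrm{Tr}_{q^h/q}(x):y): x\in\mathbb{F}_{q^h},\ y\in\mathbb{F}_q,\ (x,y)\neq(0,0)\}$. Let $P$ be a point not in $\mathcal{L}$. Then $P$ is incident with at least $q^h-q^{h-2}+1$ tangent lines to $\mathcal{L}$.
   Context: $\mathrm{Tr}_{q^h/q}(x)=x+x^q+\dots+x^{q^{h-1}}$. Points of $\mathrm{PG}(2,q^h)$ are written in homogeneous coordinates. A tangent line to $\mathcal{L}$ is a line meeting $\mathcal{L}$ in exactly one point. *)

From HB Require Import structures.
From mathcomp Require Import all_boot all_order all_algebra all_field.
Set Implicit Arguments. Unset Strict Implicit. Unset Printing Implicit Defensive.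
Import GRing.Theory.
Local Open Scope ring_scope.

Definition prime_power (q : nat) : Prop :=
  exists p k : nat, [/\ prime p, (0 < k)%N & q = (p ^ k)%N].

Section PG2.
Variable F : finFieldType.

Definition Tr (q h : nat) (x : F) : F := \sum_(i < h) x ^+ (q ^ i).

Definition row3 (a b c : F) : 'rV[F]_3 := \row_(i < 3) [:: a; b; c]`_i.

(* Canonical representative of a point (or line) of PG(2,F):
   a nonzero vector whose first nonzero coordinate is 1. *)
Definition normalized (v : 'rV[F]_3) : bool :=
  [exists i : 'I_3, (v 0 i == 1) && [forall j : 'I_3, (j < i)%N ==> (v 0 j == 0)]].

Definition incident (u l : 'rV[F]_3) : bool := \sum_(i < 3) u 0 i * l 0 i == 0.

Definition inL0 (q h : nat) (v : 'rV[F]_3) : bool :=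
  [exists x : F, exists y : F,
     [&& y ^+ q == y, (x != 0) || (y != 0) &
         [exists c : F, (c != 0) && (v == c *: row3 x (Tr q h x) y)]]].

Definition blocking_set (S : pred 'rV[F]_3) : Prop :=
  forall l : 'rV[F]_3, normalized l ->
    exists u : 'rV[F]_3, [&& normalized u, S u & incident u l].

Definition tangent (S : pred 'rV[F]_3) (l : 'rV[F]_3) : bool :=
  #|[set u : 'rV[F]_3 | [&& normalized u, S u & incident u l]]| == 1%N.

End PG2.

(* After the change of coordinates M we may assume L = L0 = {(x : Tr x : y)}.
   Its affine points are (x, Tr x) and its points at infinity are (x : Tr x : 0),
   so a vertical line X = x0 Z meets L0 only in (x0 : Tr x0 : 1), and a line
   Y = m X + k Z is tangent to L0 as soon as x |-> Tr x - m x is injective, hence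
   bijective.  Through a point at infinity this already gives q^h tangents.
   Through an affine point (a, b) with b <> Tr a, the vertical line and every line
   of slope m are tangent, except possibly for m = 0 when b is in F_q, and for
   slopes with Tr (1/m) = 1 and Tr (b/m) = Tr a.  When b is not in F_q, the
   F_q-linear map u |-> (Tr u, Tr (b u)) is onto F_q^2, so the latter slopes are
   the inverses of a coset of a subspace of codimension 2, i.e. at most q^(h-2). *)

From HB Require Import structures.
From mathcomp Require Import all_boot all_order all_algebra all_field.
From mathcomp Require Import ring zify.
From Pilot Require Import Defs.
Set Implicit Arguments. Unset Strict Implicit. Unset Printing Implicit Defensive.
Import GRing.Theory.
Local Open Scope ring_scope.

Lemma leq_card_inj_on (T T' : finType) (f : T -> T') (A : {set T}) (B : {set T'}) :
  {in A &, injective f} -> {in A, forall x, f x \in B} -> (#|A| <= #|B|)%N.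
Proof.
move=> f_inj fAB; rewrite -(card_in_imset f_inj); apply: subset_leq_card.
by apply/subsetP => _ /imsetP [x Ax ->]; apply: fAB.
Qed.

Lemma card_roots_lt_size (R : finIdomainType) (pl : {poly R}) (S : {set R}) :
  pl != 0 -> {in S, forall x, root pl x} -> (#|S| < size pl)%N.
Proof.
move=> pl_neq0 S_roots; rewrite cardE max_poly_roots ?enum_uniq //.
by apply/allP => x; rewrite mem_enum; apply: S_roots.
Qed.

Section Plane.
Variable F : finFieldType.
Implicit Types (u v w l : 'rV[F]_3) (M : 'M[F]_3).

Definition e0 : 'I_3 := @Ordinal 3 0 isT.
Definition e1 : 'I_3 := @Ordinal 3 1 isT.
Definition e2 : 'I_3 := @Ordinal 3 2 isT.

Lemma ord3P (i : 'I_3) : [\/ i = e0, i = e1 | i = e2].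
Proof.
by case: i => -[|[|[|//]]] lt_i3; [constructor 1|constructor 2|constructor 3];
  apply: val_inj.
Qed.

Lemma row3E v : v = row3 (v 0 e0) (v 0 e1) (v 0 e2).
Proof. by apply/rowP => i; rewrite mxE; case: (ord3P i) => ->. Qed.

Lemma row3Z (c a0 a1 a2 : F) : c *: row3 a0 a1 a2 = row3 (c * a0) (c * a1) (c * a2).
Proof. by apply/rowP => i; rewrite !mxE; case: (ord3P i) => ->. Qed.

Lemma row3_inj (a0 a1 a2 b0 b1 b2 : F) :
  row3 a0 a1 a2 = row3 b0 b1 b2 -> [/\ a0 = b0, a1 = b1 & a2 = b2].
Proof.
move=> eq_ab; have coord i := congr1 (fun v : 'rV[F]_3 => v 0 i) eq_ab.
by move: (coord e0) (coord e1) (coord e2); rewrite !mxE.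
Qed.

Lemma row3_eq0 (a0 a1 a2 : F) : (row3 a0 a1 a2 == 0) = [&& a0 == 0, a1 == 0 & a2 == 0].
Proof.
rewrite [0 : 'rV_3]row3E !mxE; apply/eqP/and3P => [/row3_inj [-> -> ->] //|].
by case=> /eqP-> /eqP-> /eqP->.
Qed.

Definition dot u l : F := \sum_(i < 3) u 0 i * l 0 i.

Lemma incidentE u l : incident u l = (dot u l == 0).
Proof. by []. Qed.

Lemma dot_row3 (a0 a1 a2 b0 b1 b2 : F) :
  dot (row3 a0 a1 a2) (row3 b0 b1 b2) = a0 * b0 + a1 * b1 + a2 * b2.
Proof. by rewrite /dot !big_ord_recr big_ord0 /= !mxE add0r. Qed.

Lemma dotZl c u l : dot (c *: u) l = c * dot u l.
Proof. by rewrite /dot mulr_sumr; apply: eq_bigr => i _; rewrite mxE mulrA. Qed.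

Lemma dotZr c u l : dot u (c *: l) = c * dot u l.
Proof. by rewrite /dot mulr_sumr; apply: eq_bigr => i _; rewrite mxE mulrCA. Qed.

Lemma dot_mulmx_tr u l M : dot u (l *m M^T) = dot (u *m M) l.
Proof.
have dotE w l' : dot w l' = (w *m l'^T) 0 0.
  by rewrite mxE; apply: eq_bigr => i _; rewrite mxE.
by rewrite !dotE trmx_mul trmxK mulmxA.
Qed.

Lemma normalizedP v : normalized v =
  [|| v 0 e0 == 1, (v 0 e0 == 0) && (v 0 e1 == 1)
    | [&& v 0 e0 == 0, v 0 e1 == 0 & v 0 e2 == 1]].
Proof.
apply/existsP/idP => [[i /andP [vi1 /forallP v0]]|].
  have v0_at (j : 'I_3) : (j < i)%N -> v 0 j == 0 by apply/implyP.
  case: (ord3P i) vi1 v0_at => -> -> v0_at //.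
    by rewrite (v0_at e0) ?orbT.
  by rewrite (v0_at e0) ?(v0_at e1) ?orbT.
case/or3P => [vi1|/andP [v00 vi1]|/and3P [v00 v10 vi1]];
  [exists e0|exists e1|exists e2]; rewrite vi1 /=;
  by apply/forallP => j; case: (ord3P j) => ej; subst j.
Qed.

Lemma normalized_neq0 v : normalized v -> v != 0.
Proof.
rewrite normalizedP; apply: contraTneq => ->.
by rewrite !mxE eqxx (eq_sym 0 1) oner_eq0.
Qed.

Lemma normalized_scale_eq (c : F) u w :
  normalized u -> normalized w -> u = c *: w -> u = w.
Proof.
move=> u_nrm w_nrm u_cw; suff c1 : c = 1 by rewrite u_cw c1 scale1r.
have c_neq0 : c != 0.
  by apply: contraNneq (normalized_neq0 u_nrm) => c0; rewrite u_cw c0 scale0r.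
move: u_nrm w_nrm; rewrite u_cw !normalizedP !mxE => u_nrm.
case/or3P => [/eqP w0|/andP [/eqP w0 /eqP w1]|/and3P [/eqP w0 /eqP w1 /eqP w2]];
  move: u_nrm; rewrite ?w0 ?w1 ?w2 ?mulr1 ?mulr0 ?eqxx ?(negbTE c_neq0) /= ?andbF ?orbF;
  by rewrite ?(eq_sym 0 1) ?oner_eq0 /= => /eqP.
Qed.

Definition pivot v : F :=
  if v 0 e0 != 0 then v 0 e0 else if v 0 e1 != 0 then v 0 e1 else v 0 e2.

Definition normalize v : 'rV[F]_3 := (pivot v)^-1 *: v.

Lemma normalizeP v : v != 0 ->
  normalized (normalize v) /\ exists2 c, c != 0 & normalize v = c *: v.
Proof.
move=> v_neq0; suff pivot_nrm : pivot v != 0 /\ normalized (normalize v).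
  by case: pivot_nrm => pv_neq0 ->; split; last exists (pivot v)^-1; rewrite ?invr_eq0.
rewrite /normalize /pivot normalizedP !mxE.
case: (eqVneq (v 0 e0) 0) => [v0|v0]; first case: (eqVneq (v 0 e1) 0) => [v1|v1].
- have v2 : v 0 e2 != 0 by move: v_neq0; rewrite {1}(row3E v) row3_eq0 v0 v1 eqxx.
  by rewrite v0 v1 v2 !mulr0 mulVf // !eqxx !orbT.
- by rewrite v0 v1 mulr0 mulVf // !eqxx orbT.
- by rewrite v0 mulVf // eqxx.
Qed.
End Plane.

(** * The relative trace *)

Section TraceLinearSet.
Variables (F : finFieldType) (p k q h : nat).
Hypotheses (p_prime : prime p) (q_def : q = (p ^ k)%N) (cardF : #|F| = (q ^ h)%N)
  (h_ge2 : (2 <= h)%N).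

Local Notation Tr := (@Defs.Tr F q h).

Definition Fq : {set F} := [set t | t ^+ q == t].
Definition kerTr : {set F} := [set x | Tr x == 0].

Lemma q_gt1 : (1 < q)%N.
Proof.
rewrite q_def -{1}(expn0 p) ltn_exp2l ?prime_gt1 // lt0n.
by apply: contraTneq (card_finNzRing_gt1 F) => k0; rewrite cardF q_def k0 exp1n.
Qed.

Lemma h_gt0 : (0 < h)%N.
Proof.
rewrite lt0n; apply: contraTneq (card_finNzRing_gt1 F) => h0.
by rewrite cardF h0.
Qed.

Lemma exprqD i (x y : F) : (x + y) ^+ (q ^ i) = x ^+ (q ^ i) + y ^+ (q ^ i).
Proof.
have pcharF : p \in [pchar F].
  by apply: (card_finPcharP _ p_prime); rewrite cardF q_def -expnM.
by apply: exprDn_pchar; rewrite q_def -expnM pnatX (pnatE _ p_prime) pcharF.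
Qed.

Lemma exprq0 i : (0 : F) ^+ (q ^ i) = 0.
Proof. by rewrite expr0n expn_eq0 gtn_eqF ?(ltnW q_gt1). Qed.

Lemma Fq_exprq i (c : F) : c \in Fq -> c ^+ (q ^ i) = c.
Proof.
rewrite inE => /eqP cq; elim: i => [|i IHi]; first by rewrite expr1.
by rewrite expnSr exprM IHi cq.
Qed.

Lemma Fq0 : 0 \in Fq. Proof. by rewrite inE -(expn1 q) exprq0. Qed.
Lemma Fq1 : 1 \in Fq. Proof. by rewrite inE expr1n. Qed.

Lemma FqV a : a \in Fq -> a^-1 \in Fq.
Proof. by rewrite !inE exprVn => /eqP->. Qed.

Lemma TrD x y : Tr (x + y) = Tr x + Tr y.
Proof. by rewrite -big_split; apply: eq_bigr => i _; rewrite exprqD. Qed.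

Lemma Tr0 : Tr 0 = 0.
Proof. by apply: (addrI (Tr 0)); rewrite -TrD !addr0. Qed.

Lemma TrN x : Tr (- x) = - Tr x.
Proof. by apply/eqP; rewrite -addr_eq0 -TrD addNr Tr0. Qed.

Lemma TrB x y : Tr (x - y) = Tr x - Tr y.
Proof. by rewrite TrD TrN. Qed.

Lemma TrZ c x : c \in Fq -> Tr (c * x) = c * Tr x.
Proof.
move=> Fq_c; rewrite /Defs.Tr mulr_sumr.
by apply: eq_bigr => i _; rewrite exprMn (Fq_exprq _ Fq_c).
Qed.

(* Raising to the q-th power shifts the summands of the trace cyclically,
   since x^(q^h) = x. *)
Lemma Tr_Fq x : Tr x \in Fq.
Proof.
have exprq_morph : {morph (fun y : F => y ^+ q) : a b / a + b}.
  by move=> a b /=; rewrite -(expn1 q) exprqD.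
have exprq_0 : (0 : F) ^+ q = 0 by rewrite -(expn1 q) exprq0.
have [h' h_def] : exists h', h = h'.+1 by exists h.-1; rewrite prednK ?h_gt0.
have x_qh : x ^+ (q ^ h'.+1) = x by rewrite -h_def -cardF expf_card.
rewrite inE /Defs.Tr (big_morph _ exprq_morph exprq_0) h_def.
rewrite big_ord_recr big_ord_recl /= -exprM -expnSr x_qh expn0 expr1 addrC.
by apply/eqP; congr (_ + _); apply: eq_bigr => i _; rewrite -exprM -expnSr.
Qed.

Definition Tr_poly : {poly F} := \sum_(i < h) 'X^(q ^ i).

Lemma horner_Tr_poly x : Tr_poly.[x] = Tr x.
Proof. by rewrite horner_sum; apply: eq_bigr => i _; rewrite hornerXn. Qed.

Lemma size_Tr_poly : size Tr_poly = (q ^ h.-1).+1.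
Proof.
have size_sum n : size (\sum_(i < n.+1) 'X^(q ^ i) : {poly F}) = (q ^ n).+1.
  elim: n => [|n IHn]; first by rewrite big_ord1 expn0 size_polyXn.
  by rewrite big_ord_recr /= addrC size_polyDl size_polyXn // IHn ltnS ltn_exp2l ?q_gt1.
by rewrite /Tr_poly -(prednK h_gt0) size_sum.
Qed.

Lemma card_kerTr_le : (#|kerTr| <= q ^ h.-1)%N.
Proof.
rewrite -ltnS -size_Tr_poly card_roots_lt_size //.
  by rewrite -size_poly_eq0 size_Tr_poly.
by move=> x; rewrite inE /root horner_Tr_poly.
Qed.

Lemma card_Fq_le : (#|Fq| <= q)%N.
Proof.
have size_Xq : size ('X^q - 'X : {poly F}) = q.+1.
  by rewrite size_polyDl size_polyXn // size_polyN size_polyX ltnS q_gt1.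
rewrite -ltnS -size_Xq card_roots_lt_size //; first by rewrite -size_poly_eq0 size_Xq.
by move=> t; rewrite inE /root !hornerE subr_eq0.
Qed.

Lemma exists_Tr1 : exists u, Tr u = 1.
Proof.
have [x Trx_neq0] : exists x, Tr x != 0.
  apply/existsP; apply: contraTT card_kerTr_le; rewrite negb_exists => /forallP all_Tr0.
  have -> : kerTr = setT by apply/setP => x; rewrite !inE (negPn (all_Tr0 x)).
  by rewrite -ltnNge cardsT cardF ltn_exp2l ?q_gt1 // prednK ?h_gt0.
by exists ((Tr x)^-1 * x); rewrite TrZ ?FqV ?Tr_Fq ?mulVf.
Qed.

Lemma card_F_le_Fq_kerTr : (q ^ h <= #|Fq| * #|kerTr|)%N.
Proof.
have [u Tru] := exists_Tr1.
rewrite -cardsX -cardF -cardsT.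
apply: (@leq_card_inj_on _ _ (fun x => (Tr x, x - Tr x * u))).
  by move=> x y _ _ [Trxy]; rewrite Trxy => /addIr.
by move=> x _; rewrite in_setX /= Tr_Fq inE TrB TrZ ?Tr_Fq // Tru mulr1 subrr eqxx.
Qed.

Lemma card_Fq : #|Fq| = q.
Proof.
have := card_F_le_Fq_kerTr; have := card_Fq_le; have := card_kerTr_le.
have : (0 < q ^ h.-1)%N by rewrite expn_gt0 ltnW ?q_gt1.
rewrite -(prednK h_gt0) expnS; set Q := (q ^ h.-1)%N.
by have := q_gt1; nia.
Qed.

Lemma card_kerTr : #|kerTr| = (q ^ h.-1)%N.
Proof.
have := card_F_le_Fq_kerTr; have := card_kerTr_le.
rewrite card_Fq -(prednK h_gt0) expnS; set Q := (q ^ h.-1)%N.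
by have := q_gt1; nia.
Qed.

Lemma exists_kerTr_neq0 : exists2 z, z != 0 & Tr z = 0.
Proof.
have : (1 < #|kerTr|)%N.
  by rewrite card_kerTr (leq_trans q_gt1) // -{1}(expn1 q) leq_exp2l ?q_gt1 //; lia.
rewrite (cardsD1 0) inE Tr0 eqxx /= add1n ltnS => /card_gt0P [z].
by rewrite !inE => /andP [z_neq0 /eqP Trz]; exists z.
Qed.

(* Otherwise Tr (b v) vanishes on kerTr, so Tr (b u) = Tr u * Tr (b u0) for all u,
   and Tr ((b - Tr (b u0)) u) = 0 for all u although b - Tr (b u0) <> 0. *)
Lemma exists_Tr0_Tr1 b : b \notin Fq -> exists v, Tr v = 0 /\ Tr (b * v) = 1.
Proof.
move=> b_notFq.
suff /existsP [v /andP [/eqP Trv /eqP Trbv]] :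
  [exists v, (Tr v == 0) && (Tr (b * v) == 1)] by exists v.
apply: contraT; rewrite negb_exists => /forallP no_v.
have TrM_ker v : Tr v = 0 -> Tr (b * v) = 0.
  move=> Trv; apply/eqP; apply: contraT => Trbv_neq0.
  have := no_v ((Tr (b * v))^-1 * v).
  rewrite (TrZ _ (FqV (Tr_Fq _))) Trv mulr0 eqxx mulrCA (TrZ _ (FqV (Tr_Fq _))).
  by rewrite mulVf ?eqxx.
have [u0 Tru0] := exists_Tr1.
have TrM u : Tr (b * u) = Tr u * Tr (b * u0).
  have := TrM_ker (u - Tr u * u0).
  rewrite TrB (TrZ _ (Tr_Fq u)) Tru0 mulr1 subrr mulrBr TrB mulrCA (TrZ _ (Tr_Fq u)).
  by move=> /(_ erefl) /eqP; rewrite subr_eq0 => /eqP.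
set beta := Tr (b * u0) in TrM.
have b_beta_neq0 : b - beta != 0.
  by apply: contraNneq b_notFq => /eqP; rewrite subr_eq0 => /eqP ->; apply: Tr_Fq.
have := Tru0; rewrite -(mulVKf b_beta_neq0 u0) mulrBl TrB TrM (TrZ _ (Tr_Fq _)).
by rewrite mulrC subrr => /eqP; rewrite eq_sym oner_eq0.
Qed.

Definition kerTrM b : {set F} := [set z | (Tr z == 0) && (Tr (b * z) == 0)].

Lemma card_kerTrM_le b : b \notin Fq -> (#|kerTrM b| * q <= q ^ h.-1)%N.
Proof.
move=> b_notFq; have [v [Trv Trbv]] := exists_Tr0_Tr1 b_notFq.
rewrite -[X in (_ * X <= _)%N]card_Fq -card_kerTr -cardsX.
apply: (@leq_card_inj_on _ _ (fun zt => zt.1 + zt.2 * v)).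
  move=> [z1 t1] [z2 t2]; rewrite !in_setX ![_ \in kerTrM _]inE /=.
  move=> /andP [/andP [_ /eqP Trbz1] Fq_t1] /andP [/andP [_ /eqP Trbz2] Fq_t2] eq_zt.
  have t12 : t1 = t2.
    have := congr1 (fun w => Tr (b * w)) eq_zt; rewrite /= !mulrDr !TrD Trbz1 Trbz2.
    by rewrite !add0r !(mulrCA b) (TrZ _ Fq_t1) (TrZ _ Fq_t2) Trbv !mulr1.
  by move: eq_zt; rewrite t12 => /addIr ->.
move=> [z t]; rewrite in_setX inE /= => /andP [/andP [/eqP Trz _] Fq_t].
by rewrite inE TrD TrZ // Trv Trz mulr0 addr0.
Qed.

Lemma card_Tr1_TrM_le b a : b \notin Fq ->
  (#|[set u | ((Tr u == 1) && (Tr (b * u) == a))%R]| <= q ^ h.-2)%N.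
Proof.
move=> b_notFq; set U := [set u | _].
have [->|[u1 Uu1]] := set_0Vmem U; first by rewrite cards0.
have : (#|U| * q <= q ^ h.-1)%N.
  apply: leq_trans (card_kerTrM_le b_notFq); rewrite leq_mul2r; apply/orP; right.
  apply: (@leq_card_inj_on _ _ (fun u => u - u1)); first by move=> x y _ _ /addIr.
  move: Uu1; rewrite inE => /andP [/eqP Tru1 /eqP Trbu1] u.
  rewrite !inE => /andP [/eqP Tru /eqP Trbu].
  by rewrite TrB Tru Tru1 subrr mulrBr TrB Trbu Trbu1 subrr eqxx.
have -> : h.-1 = h.-2.+1 by lia.
by rewrite expnSr leq_pmul2r ?(ltnW q_gt1).
Qed.

(** * Tangent lines to L0 *)

Local Notation inL0 := (@Defs.inL0 F q h).

Lemma inL0P w : reflect (exists x y c,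
    [/\ y \in Fq, (x != 0) || (y != 0), c != 0 & w = c *: row3 x (Tr x) y])
  (inL0 w).
Proof.
apply: (iffP existsP) => [[x /existsP [y]]|[x [y [c [Fq_y xy_neq0 c_neq0 ->]]]]].
  case/and3P=> yq xy_neq0 /existsP [c /andP [c_neq0 /eqP ->]].
  by exists x, y, c; rewrite inE.
move: Fq_y; rewrite inE => yq; exists x; apply/existsP; exists y.
by rewrite yq xy_neq0; apply/existsP; exists c; rewrite c_neq0 eqxx.
Qed.

Lemma inL0_row3 x y : y \in Fq -> (x != 0) || (y != 0) -> inL0 (row3 x (Tr x) y).
Proof.
by move=> Fq_y xy_neq0; apply/inL0P; exists x, y, 1; rewrite scale1r oner_eq0.
Qed.

Lemma inL0Z c w : c != 0 -> inL0 w -> inL0 (c *: w).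
Proof.
move=> c_neq0 /inL0P [x [y [d [Fq_y xy_neq0 d_neq0 ->]]]].
by apply/inL0P; exists x, y, (c * d); rewrite scalerA mulf_neq0.
Qed.

Lemma inL0_neq0 w : inL0 w -> w != 0.
Proof.
case/inL0P => x [y [c [_ xy_neq0 c_neq0 ->]]].
rewrite row3Z row3_eq0 !mulf_eq0 (negbTE c_neq0) /=.
by case/orP: xy_neq0 => /negbTE->; rewrite ?andbF.
Qed.

Lemma inL0_cases w : inL0 w -> exists c x, c != 0 /\
  (w = c *: row3 x (Tr x) 1 \/ x != 0 /\ w = c *: row3 x (Tr x) 0).
Proof.
case/inL0P => x [y [c [Fq_y xy_neq0 c_neq0 ->]]].
have [y0|y_neq0] := eqVneq y 0.
  by exists c, x; split=> //; right; move: xy_neq0; rewrite y0 eqxx orbF.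
exists (c * y), (y^-1 * x); split; first by rewrite mulf_neq0.
by left; rewrite -scalerA (TrZ _ (FqV Fq_y)) [y *: _]row3Z !(mulVKf y_neq0) mulr1.
Qed.

Definition tangent_at l w0 : Prop :=
  [/\ inL0 w0, dot w0 l = 0 & forall w, inL0 w -> dot w l = 0 -> exists c, w = c *: w0].

Lemma tangent_atI l w0 : inL0 w0 -> dot w0 l = 0 ->
  (forall x, dot (row3 x (Tr x) 1) l = 0 -> exists c, row3 x (Tr x) 1 = c *: w0) ->
  (forall x, x != 0 -> dot (row3 x (Tr x) 0) l = 0 ->
     exists c, row3 x (Tr x) 0 = c *: w0) ->
  tangent_at l w0.
Proof.
move=> L0_w0 l_w0 affine infinite; split=> // w /inL0_cases [c [x [c_neq0 w_def]]].
case: w_def => [->|[x_neq0 ->]]; rewrite dotZl => /eqP.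
  rewrite mulf_eq0 (negbTE c_neq0) => /eqP /affine [d ->].
  by exists (c * d); rewrite scalerA.
rewrite mulf_eq0 (negbTE c_neq0) => /eqP /(infinite _ x_neq0) [d ->].
by exists (c * d); rewrite scalerA.
Qed.

Lemma tangent_at_vertical x0 : tangent_at (row3 1 0 (- x0)) (row3 x0 (Tr x0) 1).
Proof.
apply: tangent_atI => [||x|x x_neq0]; rewrite ?dot_row3.
- by apply: inL0_row3; rewrite ?Fq1 ?oner_eq0 ?orbT.
- by ring.
- move=> /eqP; rewrite mulr1 mulr0 addr0 mul1r subr_eq0 => /eqP ->.
  by exists 1; rewrite scale1r.
- by move=> /eqP; rewrite mulr1 mulr0 mul0r !addr0 (negbTE x_neq0).
Qed.

Lemma tangent_at_slope m k0 : (forall x, Tr x = m * x -> x = 0) ->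
  exists w0, tangent_at (row3 m (-1) k0) w0.
Proof.
move=> fixed0; pose phi x := Tr x - m * x.
have phiB x y : phi (x - y) = phi x - phi y by rewrite /phi TrB; ring.
have phi_inj : injective phi.
  move=> x y phi_xy; apply/eqP; rewrite -subr_eq0; apply/eqP/fixed0/eqP.
  by rewrite -subr_eq0 -/(phi (x - y)) phiB phi_xy subrr.
have [x0 phi_x0] : exists x0, phi x0 = k0.
  by have /codomP [x0 ->] := inj_card_onto phi_inj (leqnn _) k0; exists x0.
have l_phi x a : dot (row3 x (Tr x) a) (row3 m (-1) k0) = a * k0 - phi x.
  by rewrite dot_row3 /phi; ring.
exists (row3 x0 (Tr x0) 1); apply: tangent_atI => [||x|x x_neq0]; rewrite ?l_phi.
- by apply: inL0_row3; rewrite ?Fq1 ?oner_eq0 ?orbT.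
- by rewrite phi_x0 mul1r subrr.
- move=> /eqP; rewrite mul1r subr_eq0 -phi_x0 => /eqP /phi_inj ->.
  by exists 1; rewrite scale1r.
- move=> /eqP; rewrite mul0r sub0r oppr_eq0 /phi subr_eq0 => /eqP /fixed0 x0'.
  by rewrite x0' eqxx in x_neq0.
Qed.

Lemma tangent_at_horizontal b : b \notin Fq -> tangent_at (row3 0 (-1) b) (row3 1 0 0).
Proof.
move=> b_notFq; apply: tangent_atI => [||x|x x_neq0]; rewrite ?dot_row3.
- have [z z_neq0 Trz] := exists_kerTr_neq0.
  have -> : row3 1 0 0 = z^-1 *: row3 z (Tr z) 0 by rewrite row3Z Trz mulr0 mulVf.
  by apply: inL0Z; rewrite ?invr_eq0 ?inL0_row3 ?Fq0 ?z_neq0.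
- by ring.
- move=> /eqP; rewrite mulr0 add0r mul1r mulrN1 addrC subr_eq0 => /eqP b_Tr.
  by move: b_notFq; rewrite b_Tr Tr_Fq.
- move=> /eqP; rewrite mulr0 mul0r add0r addr0 mulrN1 oppr_eq0 => /eqP Trx.
  by exists x; rewrite row3Z Trx !mulr0 mulr1.
Qed.

(* On this line the points of L0 at infinity reduce to [m^-1 : 1 : 0], while an
   affine point (x, Tr x) would force Tr (b / m) = Tr a on taking traces. *)
Lemma tangent_at_trace_one a b m : m != 0 -> Tr m^-1 = 1 -> Tr (b * m^-1) != Tr a ->
  tangent_at (row3 m (-1) (b - m * a)) (row3 m^-1 1 0).
Proof.
move=> m_neq0 Trm Trb_neq; apply: tangent_atI => [||x|x x_neq0]; rewrite ?dot_row3.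
- by rewrite -Trm; apply: inL0_row3; rewrite ?Fq0 ?invr_eq0 ?m_neq0.
- by rewrite mulVf //; ring.
- move=> l_x; have Trx : Tr x = x * m + (b - m * a).
    by rewrite -[Tr x]addr0 -l_x; ring.
  have x_def : x = Tr x * m^-1 - b * m^-1 + a by rewrite Trx; field.
  have := congr1 Tr x_def; rewrite !TrD TrN (TrZ _ (Tr_Fq x)) Trm mulr1.
  move=> /eqP; rewrite -subr_eq0 => /eqP Tr_eq.
  suff : Tr (b * m^-1) - Tr a = 0 by move/eqP; rewrite subr_eq0 (negbTE Trb_neq).
  by rewrite -Tr_eq; ring.
- move=> l_x; have Trx : Tr x = m * x by rewrite -[Tr x]addr0 -l_x; ring.
  by exists (m * x); rewrite row3Z Trx mulr1 mulr0; congr row3; field.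
Qed.

Definition tangents_through (M : 'M[F]_3) (P : 'rV[F]_3) : {set 'rV[F]_3} :=
  [set l | [&& normalized l, incident P l & tangent (fun v => inL0 (v *m M)) l]].

Lemma mulmx_unit_neq0 (M : 'M[F]_3) (l : 'rV[F]_3) :
  M \in unitmx -> l != 0 -> l *m M != 0.
Proof. by move=> M_unit; rewrite mulmx_free_eq0 // row_free_unit. Qed.

Lemma tangent_at_normalize M P l w0 : M \in unitmx -> l != 0 ->
  dot (P *m M) l = 0 -> tangent_at l w0 -> normalize (l *m M^T) \in tangents_through M P.
Proof.
move=> M_unit l_neq0 P_l [L0_w0 w0_l w0_unique].
have MT_unit : M^T \in unitmx by rewrite unitmx_tr.
have [lM_nrm [c c_neq0 lM_def]] := normalizeP (mulmx_unit_neq0 MT_unit l_neq0).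
have Minv_unit : invmx M \in unitmx by rewrite unitmx_inv.
have [u0_nrm [d d_neq0 u0_def]] :=
  normalizeP (mulmx_unit_neq0 Minv_unit (inL0_neq0 L0_w0)).
set u0 := normalize (w0 *m invmx M) in u0_nrm u0_def *.
have u0M : u0 *m M = d *: w0 by rewrite u0_def -scalemxAl mulmxKV.
have incidentM u : incident u (normalize (l *m M^T)) = (dot (u *m M) l == 0).
  by rewrite incidentE lM_def dotZr dot_mulmx_tr mulf_eq0 (negbTE c_neq0).
rewrite inE lM_nrm incidentM P_l eqxx /=.
apply/cards1P; exists u0; apply/setP => u; rewrite !inE incidentM.
apply/idP/eqP => [/and3P [u_nrm L0_uM /eqP uM_l]|->]; last first.
  by rewrite u0_nrm u0M (inL0Z d_neq0 L0_w0) dotZl w0_l mulr0 eqxx.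
have [e uM_def] := w0_unique _ L0_uM uM_l.
apply: (normalized_scale_eq (c := e / d)) => //.
rewrite -(mulmxK M_unit u) uM_def u0_def scalerA -mulrA mulVf // mulr1.
by rewrite scalemxAl.
Qed.

Lemma count_tangents (I : finType) (D : {set I}) (g : I -> 'rV[F]_3) M P :
  M \in unitmx ->
  (forall o, o \in D ->
     [/\ g o != 0, dot (P *m M) (g o) = 0 & exists w0, tangent_at (g o) w0]) ->
  (forall o1 o2 c, o1 \in D -> o2 \in D -> g o1 = c *: g o2 -> o1 = o2) ->
  (#|D| <= #|tangents_through M P|)%N.
Proof.
move=> M_unit g_tangent g_inj.
apply: (@leq_card_inj_on _ _ (fun o => normalize (g o *m M^T))); last first.
  by move=> o /g_tangent [g_neq0 P_g [w0 g_w0]]; apply: tangent_at_normalize g_w0.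
move=> o1 o2 D_o1 D_o2 eq_nrm.
have MT_unit : M^T \in unitmx by rewrite unitmx_tr.
have [g1_neq0 _ _] := g_tangent _ D_o1; have [g2_neq0 _ _] := g_tangent _ D_o2.
have [_ [c1 c1_neq0 nrm1]] := normalizeP (mulmx_unit_neq0 MT_unit g1_neq0).
have [_ [c2 _ nrm2]] := normalizeP (mulmx_unit_neq0 MT_unit g2_neq0).
apply: (g_inj _ _ (c1^-1 * c2) D_o1 D_o2); apply: (can_inj (mulmxK MT_unit)) => /=.
by rewrite -scalemxAl -scalerA -nrm2 -eq_nrm nrm1 scalerA mulVf ?scale1r.
Qed.

Lemma card_tangents_vertical M P c : M \in unitmx -> P *m M = c *: row3 0 1 0 ->
  (q ^ h <= #|tangents_through M P|)%N.
Proof.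
move=> M_unit P_def; rewrite -cardF -cardsT.
apply: (count_tangents (g := fun x0 => row3 1 0 (- x0))) => // [x0 _|x1 x2 c' _ _].
  split; first by rewrite row3_eq0 oner_eq0.
    by rewrite P_def dotZl dot_row3; ring.
  by exists (row3 x0 (Tr x0) 1); apply: tangent_at_vertical.
rewrite row3Z => /row3_inj [c1 _ x12].
by move: x12; rewrite -[c']mulr1 -c1 mul1r => /oppr_inj.
Qed.

Lemma card_tangents_infinite M P c m : M \in unitmx -> P *m M = c *: row3 1 m 0 ->
  (forall x, Tr x = m * x -> x = 0) -> (q ^ h <= #|tangents_through M P|)%N.
Proof.
move=> M_unit P_def fixed0; rewrite -cardF -cardsT.
apply: (count_tangents (g := fun k0 => row3 m (-1) k0)) => // [k0 _|k1 k2 c' _ _].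
  split; first by rewrite row3_eq0 oppr_eq0 oner_eq0 andbF.
    by rewrite P_def dotZl dot_row3; ring.
  exact: tangent_at_slope.
rewrite row3Z => /row3_inj [_ c1 ->].
suff -> : c' = 1 by rewrite mul1r.
by apply: oppr_inj; rewrite c1; ring.
Qed.

Definition bad_slopes a b : {set F} := [set m | ((m == 0) && (b \in Fq))
  || [&& m != 0, Tr m^-1 == 1 & Tr (b * m^-1) == Tr a]].

Lemma tangent_at_good_slope a b m : m \notin bad_slopes a b ->
  exists w0, tangent_at (row3 m (-1) (b - m * a)) w0.
Proof.
rewrite inE negb_or => /andP [m0_b m_bad].
have [m0|m_neq0] := eqVneq m 0.
  exists (row3 1 0 0); rewrite m0 mul0r subr0; apply: tangent_at_horizontal.
  by move: m0_b; rewrite m0 eqxx.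
have [Trm|Trm_neq1] := eqVneq (Tr m^-1) 1.
  exists (row3 m^-1 1 0); apply: tangent_at_trace_one => //.
  by move: m_bad; rewrite m_neq0 Trm eqxx.
apply: tangent_at_slope => x Trx; apply/eqP; apply: contraNT Trm_neq1 => x_neq0.
have Trx_neq0 : Tr x != 0 by rewrite Trx mulf_neq0.
have x_def : x = Tr x * m^-1 by rewrite Trx mulrAC mulfV ?mul1r.
apply/eqP; apply: (mulfI Trx_neq0).
by rewrite mulr1 -(TrZ _ (Tr_Fq x)) -x_def.
Qed.

Lemma card_bad_slopes_le a b : b != Tr a -> (#|bad_slopes a b| <= q ^ h.-2)%N.
Proof.
move=> b_neq; have [Fq_b|b_notFq] := boolP (b \in Fq).
  apply: (@leq_trans 1); last by rewrite expn_gt0 ltnW ?q_gt1.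
  rewrite -(cards1 (0 : F)); apply: subset_leq_card; apply/subsetP => m.
  rewrite in_set1 inE Fq_b andbT => /orP [//|/and3P [_ /eqP Trm /eqP Trb]].
  by move: b_neq; rewrite -Trb (TrZ _ Fq_b) Trm mulr1 eqxx.
apply: leq_trans (card_Tr1_TrM_le (Tr a) b_notFq).
apply: (@leq_card_inj_on _ _ GRing.inv); first by move=> x y _ _; apply: invr_inj.
move=> m; rewrite inE (negbTE b_notFq) andbF /= => /and3P [_ Trm Trb].
by rewrite inE Trm Trb.
Qed.

Lemma card_tangents_affine M P c a b : M \in unitmx -> P *m M = c *: row3 a b 1 ->
  b != Tr a -> (q ^ h - q ^ h.-2 + 1 <= #|tangents_through M P|)%N.
Proof.
move=> M_unit P_def b_neq.
pose g o := if o is Some m then row3 m (-1) (b - m * a) else row3 1 0 (- a).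
pose D : {set option F} := None |: (Some @: ~: bad_slopes a b).
have card_D : #|D| = (q ^ h - #|bad_slopes a b|).+1.
  rewrite cardsU1 card_imset; last exact: Some_inj.
  have -> : None \notin Some @: ~: bad_slopes a b by apply/imsetP => -[].
  by rewrite [#|~: _|]cardsCs setCK cardF.
have := card_bad_slopes_le b_neq; have : (#|D| <= #|tangents_through M P|)%N.
  apply: (count_tangents (g := g)) => // [o|[m1|] [m2|] c' _ _].
  - rewrite in_setU1 => /predU1P [->|/imsetP [m m_good ->]].
      split; first by rewrite row3_eq0 oner_eq0.
        by rewrite P_def dotZl dot_row3; ring.
      by exists (row3 a (Tr a) 1); apply: tangent_at_vertical.
    split; first by rewrite row3_eq0 oppr_eq0 oner_eq0 andbF.
      by rewrite P_def dotZl dot_row3; ring.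
    by apply: tangent_at_good_slope; rewrite inE in m_good.
  - rewrite /g row3Z => /row3_inj [-> c1 _].
    suff -> : c' = 1 by rewrite mul1r.
    by apply: oppr_inj; rewrite c1; ring.
  - by rewrite /g row3Z => /row3_inj [_ /eqP]; rewrite mulr0 oppr_eq0 oner_eq0.
  - rewrite /g row3Z => /row3_inj [/eqP + /esym/eqP]; rewrite mulrN1 oppr_eq0.
    by move=> + /eqP c0; rewrite c0 mul0r oner_eq0.
  - by [].
by rewrite card_D; lia.
Qed.

Lemma card_tangents_through_ge M P : M \in unitmx -> ~~ inL0 (P *m M) ->
  (q ^ h - q ^ h.-2 + 1 <= #|tangents_through M P|)%N.
Proof.
move=> M_unit P_notL0.
have [a0 [a1 [a2 P_def]]] : exists a0 a1 a2, P *m M = row3 a0 a1 a2.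
  by do 3!eexists; apply: row3E.
rewrite P_def in P_notL0.
have [a2_0|a2_neq0] := eqVneq a2 0; last first.
  apply: (card_tangents_affine (c := a2) (a := a0 / a2) (b := a1 / a2) M_unit).
    by rewrite P_def row3Z; congr row3; field.
  apply: contraNneq P_notL0 => b_def.
  have -> : row3 a0 a1 a2 = a2 *: row3 (a0 / a2) (Tr (a0 / a2)) 1.
    by rewrite -b_def row3Z; congr row3; field.
  by apply: inL0Z => //; apply: inL0_row3; rewrite ?Fq1 ?oner_eq0 ?orbT.
have qh2_le : (q ^ h - q ^ h.-2 + 1 <= q ^ h)%N.
  have qn_gt0 n : (0 < q ^ n)%N by rewrite expn_gt0 ltnW ?q_gt1.
  have := qn_gt0 h; have := qn_gt0 h.-2.
  by set Q := (q ^ h)%N; set Q2 := (q ^ h.-2)%N; lia.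
apply: leq_trans qh2_le _; have [a0_0|a0_neq0] := eqVneq a0 0.
  apply: (card_tangents_vertical (c := a1) M_unit).
  by rewrite P_def a0_0 a2_0 row3Z !mulr0 mulr1.
apply: (card_tangents_infinite (c := a0) (m := a1 / a0) M_unit).
  by rewrite P_def a2_0 row3Z mulr1 mulr0; congr row3; field.
move=> x Trx; apply/eqP; apply: contraNT P_notL0 => x_neq0.
have -> : row3 a0 a1 a2 = (a0 / x) *: row3 x (Tr x) 0.
  by rewrite a2_0 row3Z Trx mulr0; congr row3; field; rewrite ?x_neq0 ?a0_neq0.
by apply: inL0Z; rewrite ?mulf_neq0 ?invr_eq0 // inL0_row3 ?Fq0 ?x_neq0.
Qed.

End TraceLinearSet.

Theorem lemma2p10 (F : finFieldType) (q h : nat)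
  (hq : prime_power q) (hh : (2 <= h)%N) (hF : #|F| = (q ^ h)%N)
  (M : 'M[F]_3) (hM : M \in unitmx)
  (hblock : blocking_set (fun v : 'rV[F]_3 => inL0 q h (v *m M)))
  (P : 'rV[F]_3) (hP : normalized P) (hPL : ~~ inL0 q h (P *m M)) :
  (q ^ h - q ^ (h - 2) + 1 <=
   #|[set l : 'rV[F]_3 | [&& normalized l, incident P l &
        tangent (fun v : 'rV[F]_3 => inL0 q h (v *m M)) l]]|)%N.
Proof.
case: hq => p [k [p_prime _ q_def]]; rewrite subn2.
exact: card_tangents_through_ge p_prime q_def hF hh M P hM hPL.
Qed.
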